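(* For every positive integer $n$, $$\sum_{j=1}^{n}\csc^8\left(\frac{\pi j}{2n+1}\right) = \frac{128(n+1)n(n^2+n+3)(3n^4+6n^3+7n^2+4n+15)}{14175}.$$ *)

From Stdlib Require Import Reals.
Open Scope R_scope.

Definition csc (x : R) : R := / sin x.

(** Put [N = 2n + 1] and [x_j = sin² (π j / N)] for [1 <= j <= n].  Since
    [sin (N t) / sin t] is a polynomial of degree [n] in [sin² t] with constant
    term [N], the [x_j] are exactly its roots.  The sum to compute is
    [Σ 1 / x_j^4], a power sum of the reciprocal roots, which Newton's
    identities express through the four lowest coefficients of that polynomial;
    these are found in closed form from the recurrence
    [sin ((N + 2) t) = 2 (1 - 2 sin² t) sin (N t) - sin ((N - 2) t)]. *)

From Stdlib Require Import Reals Lra Lia.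
Open Scope R_scope.

Definition peval (p : nat -> R) (d : nat) (x : R) : R :=
  sum_f_R0 (fun k => p k * x ^ k) d.

Definition shift (p : nat -> R) (k : nat) : R :=
  match k with O => 0 | S k' => p k' end.

Lemma peval_shift p d x : peval (shift p) (S d) x = x * peval p d x.
Proof.
  unfold peval; induction d as [|d IH]; simpl in *; [ring|].
  rewrite IH; ring.
Qed.

Lemma peval_scale p a d x : peval (fun k => p k / a) d x = peval p d x / a.
Proof.
  unfold peval, Rdiv; induction d as [|d IH]; simpl in *; [ring|].
  rewrite IH; ring.
Qed.

Lemma peval_ext p q d x : (forall k, p k = q k) -> peval p d x = peval q d x.
Proof. intro pq; apply sum_eq; intros; rewrite pq; reflexivity. Qed.

Lemma peval_lincomb a b f g h d x :
  peval (fun k => a * f k - b * g k - h k) d x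
  = a * peval f d x - b * peval g d x - peval h d x.
Proof.
  unfold peval; induction d as [|d IH]; simpl in *; [ring|].
  rewrite IH; ring.
Qed.

Lemma peval_deg p d d' x :
  (d <= d')%nat -> (forall k, (d < k)%nat -> p k = 0) -> peval p d' x = peval p d x.
Proof.
  intros le_dd' p_deg; induction le_dd' as [|d' le_dd' IH]; [reflexivity|].
  unfold peval in *; simpl; rewrite IH, p_deg by lia; ring.
Qed.

(** Coefficients of [p(x) / (1 - u x)]: the remainder is the last coefficient. *)
Fixpoint syndiv (p : nat -> R) (u : R) (k : nat) : R :=
  match k with O => p O | S k' => p (S k') + u * syndiv p u k' end.

Lemma peval_syndiv p u d x :
  peval p d x = (1 - u * x) * peval (syndiv p u) d x + u * x ^ S d * syndiv p u d.
Proof.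
  unfold peval; induction d as [|d IH]; simpl in *; [ring|].
  rewrite IH; ring.
Qed.

Lemma syndiv_succ p u k : p (S k) = syndiv p u (S k) - u * syndiv p u k.
Proof. simpl; ring. Qed.

Section Deflation.

Variables (p : nat -> R) (m : nat) (r : R).
Hypothesis p_deg : forall k, (S m < k)%nat -> p k = 0.
Hypothesis r_neq0 : r <> 0.
Hypothesis p_root : peval p (S m) r = 0.

Lemma syndiv_root_deg k : (m < k)%nat -> syndiv p (/ r) k = 0.
Proof.
  assert (top : syndiv p (/ r) (S m) = 0).
  { pose proof (peval_syndiv p (/ r) (S m) r) as H.
    rewrite p_root, Rinv_l, Rminus_diag, Rmult_0_l, Rplus_0_l in H by exact r_neq0.
    symmetry in H; apply Rmult_integral in H as [H | H]; [exfalso | exact H].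
    apply Rmult_integral in H as [H | H].
    - exact (Rinv_neq_0_compat r r_neq0 H).
    - exact (pow_nonzero r _ r_neq0 H). }
  intro lt_m_k; induction k as [|k IH]; [lia|].
  destruct (Nat.eq_dec k m) as [-> | ne_km]; [exact top|].
  simpl; rewrite IH, p_deg by lia; ring.
Qed.

Lemma syndiv_other_root r' :
  r' <> r -> peval p (S m) r' = 0 -> peval (syndiv p (/ r)) m r' = 0.
Proof.
  intros ne_r' root_r'.
  pose proof (peval_syndiv p (/ r) (S m) r') as H.
  change (peval (syndiv p (/ r)) (S m) r')
    with (peval (syndiv p (/ r)) m r' + syndiv p (/ r) (S m) * r' ^ S m) in H.
  rewrite root_r', !syndiv_root_deg in H by lia.
  assert (factor : 1 - / r * r' <> 0).
  { intro eq1; apply ne_r'.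
    replace r' with (r * (/ r * r')) by (field; exact r_neq0).
    replace (/ r * r') with 1 by lra; ring. }
  apply (Rmult_eq_reg_l (1 - / r * r')); [lra | exact factor].
Qed.

End Deflation.

Fixpoint inv_power_sum (k : nat) (r : nat -> R) (m : nat) : R :=
  match m with O => 0 | S m' => inv_power_sum k r m' + (/ r m') ^ k end.

Lemma inv_power_sums_newton m : forall (r p : nat -> R),
  (forall i j, (i < j < m)%nat -> r i <> r j) ->
  (forall i, (i < m)%nat -> r i <> 0 /\ peval p m (r i) = 0) ->
  p 0%nat = 1 -> (forall k, (m < k)%nat -> p k = 0) ->
  inv_power_sum 1 r m = - p 1%nat /\
  inv_power_sum 2 r m = p 1%nat ^ 2 - 2 * p 2%nat /\
  inv_power_sum 3 r m = - p 1%nat ^ 3 + 3 * p 1%nat * p 2%nat - 3 * p 3%nat /\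
  inv_power_sum 4 r m = p 1%nat ^ 4 - 4 * p 1%nat ^ 2 * p 2%nat + 2 * p 2%nat ^ 2
                        + 4 * p 1%nat * p 3%nat - 4 * p 4%nat.
Proof.
  induction m as [|m IH]; intros r p r_inj roots p0 p_deg.
  { simpl; rewrite !p_deg by lia; repeat split; ring. }
  destruct (roots m (Nat.lt_succ_diag_r m)) as [rm_neq0 rm_root].
  set (q := syndiv p (/ r m)).
  destruct (IH r q) as (S1 & S2 & S3 & S4).
  - intros i j ij; apply r_inj; lia.
  - intros i lt_i_m; destruct (roots i ltac:(lia)) as [ri_neq0 ri_root].
    split; [exact ri_neq0|].
    exact (syndiv_other_root p m (r m) p_deg rm_neq0 rm_root (r i)
             (r_inj i m ltac:(lia)) ri_root).
  - exact p0.
  - exact (syndiv_root_deg p m (r m) p_deg rm_neq0 rm_root).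
  - simpl inv_power_sum; rewrite S1, S2, S3, S4.
    rewrite !(syndiv_succ p (/ r m)); fold q.
    replace (q 0%nat) with 1 by exact (eq_sym p0).
    repeat split; ring.
Qed.

Lemma nat_ind2 (P : nat -> Prop) :
  P 0%nat -> P 1%nat -> (forall n, P n -> P (S n) -> P (S (S n))) -> forall n, P n.
Proof. intros; apply Nat.pair_induction; auto; intros ? ? ->; reflexivity. Qed.

Fixpoint sin_odd_coef (n : nat) : nat -> R :=
  match n with
  | O => fun k => match k with O => 1 | _ => 0 end
  | S O => fun k => match k with O => 3 | S O => -4 | _ => 0 end
  | S (S n' as n1) =>
      fun k => 2 * sin_odd_coef n1 k - 4 * shift (sin_odd_coef n1) k - sin_odd_coef n' k
  end.

Lemma sin_odd_coef_rec n k :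
  sin_odd_coef (S (S n)) k
  = 2 * sin_odd_coef (S n) k - 4 * shift (sin_odd_coef (S n)) k - sin_odd_coef n k.
Proof. reflexivity. Qed.

Lemma sin_odd_coef_deg n : forall k, (n < k)%nat -> sin_odd_coef n k = 0.
Proof.
  induction n as [| |n IH0 IH1] using nat_ind2.
  - intros [|k] lt_k; [lia | reflexivity].
  - intros [|[|k]] lt_k; [lia | lia | reflexivity].
  - intros [|k] lt_k; [lia|].
    rewrite sin_odd_coef_rec, IH0, IH1 by lia; cbn [shift]; rewrite IH1 by lia; ring.
Qed.

Lemma sin_add_double a t :
  sin (a + 2 * t) = 2 * (1 - 2 * sin t ^ 2) * sin a - sin (a - 2 * t).
Proof. rewrite sin_plus, sin_minus, cos_2a_sin; ring. Qed.

Lemma sin_odd_mul n t :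
  sin (INR (2 * n + 1) * t) = sin t * peval (sin_odd_coef n) n (sin t ^ 2).
Proof.
  induction n as [| |n IH0 IH1] using nat_ind2.
  - unfold peval; simpl; rewrite Rmult_1_l; ring.
  - unfold peval; simpl.
    replace ((1 + 1 + 1) * t) with (t + 2 * t) by ring.
    rewrite sin_add_double; replace (t - 2 * t) with (- t) by ring.
    rewrite sin_neg; ring.
  - replace (INR (2 * S (S n) + 1) * t) with (INR (2 * S n + 1) * t + 2 * t)
      by (rewrite !plus_INR, !mult_INR, !S_INR; simpl; ring).
    rewrite sin_add_double.
    replace (INR (2 * S n + 1) * t - 2 * t) with (INR (2 * n + 1) * t)
      by (rewrite !plus_INR, !mult_INR, !S_INR; simpl; ring).
    rewrite IH0, IH1.
    rewrite (peval_ext _ _ _ _ (sin_odd_coef_rec n)), peval_lincomb, peval_shift.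
    rewrite (peval_deg (sin_odd_coef (S n)) (S n) (S (S n))),
            (peval_deg (sin_odd_coef n) n (S (S n))) by (auto using sin_odd_coef_deg).
    ring.
Qed.

Fixpoint sin_odd_coef_closed (k : nat) (N : R) : R :=
  match k with
  | O => N
  | S k' => - sin_odd_coef_closed k' N * (N ^ 2 - (2 * INR k' + 1) ^ 2)
            / ((2 * INR k' + 2) * (2 * INR k' + 3))
  end.

(** The closed form holds for every [k]; only the coefficients entering Newton's
    identities for the fourth power sum are checked. *)
Lemma sin_odd_coef_low n : forall k, (k <= 4)%nat ->
  sin_odd_coef n k = sin_odd_coef_closed k (2 * INR n + 1).
Proof.
  induction n as [| |n IH0 IH1] using nat_ind2; intros k le_k4.
  1, 2: do 5 (destruct k as [|k]; [simpl; field|]); lia.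
  rewrite sin_odd_coef_rec, IH0, IH1 by exact le_k4.
  rewrite !S_INR; destruct k as [|k]; cbn [shift]; [simpl; field|].
  rewrite IH1, S_INR by lia; do 4 (destruct k as [|k]; [simpl; field|]); lia.
Qed.

Definition sin_odd_root (n i : nat) : R := sin (PI * INR (S i) / (2 * INR n + 1)) ^ 2.

Lemma root_angle_bounds n i :
  (i < n)%nat -> 0 < PI * INR (S i) / (2 * INR n + 1) < PI / 2.
Proof.
  intro lt_i_n; pose proof PI_RGT_0.
  assert (le_Si_n : INR (S i) <= INR n) by (apply le_INR; lia).
  assert (pos_Si : 0 < INR (S i)) by (apply lt_0_INR; lia).
  assert (pos_N : 0 < 2 * INR n + 1) by lra.
  split.
  - apply Rdiv_lt_0_compat; [apply Rmult_lt_0_compat|]; assumption.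
  - apply (Rmult_lt_reg_r (2 * INR n + 1)); [exact pos_N|].
    unfold Rdiv; rewrite Rmult_assoc, Rinv_l by lra; nra.
Qed.

Lemma sin_root_angle_pos n i : (i < n)%nat -> 0 < sin (PI * INR (S i) / (2 * INR n + 1)).
Proof. intro lt_i_n; destruct (root_angle_bounds n i lt_i_n); apply sin_gt_0; lra. Qed.

Lemma sin_odd_root_lt n i j : (i < j < n)%nat -> sin_odd_root n i < sin_odd_root n j.
Proof.
  intro ij; unfold sin_odd_root.
  assert (lt_sin : sin (PI * INR (S i) / (2 * INR n + 1))
                   < sin (PI * INR (S j) / (2 * INR n + 1))).
  { destruct (root_angle_bounds n i ltac:(lia)), (root_angle_bounds n j ltac:(lia)).
    apply sin_increasing_1; try lra.
    pose proof (pos_INR n).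
    unfold Rdiv; apply Rmult_lt_compat_r; [apply Rinv_0_lt_compat; lra|].
    apply Rmult_lt_compat_l; [exact PI_RGT_0 | apply lt_INR; lia]. }
  pose proof (sin_root_angle_pos n i ltac:(lia)); nra.
Qed.

Lemma sin_odd_root_is_root n i :
  (i < n)%nat -> peval (sin_odd_coef n) n (sin_odd_root n i) = 0.
Proof.
  intro lt_i_n; unfold sin_odd_root.
  set (t := PI * INR (S i) / (2 * INR n + 1)).
  assert (sin_Nt : sin (INR (2 * n + 1) * t) = 0).
  { apply sin_eq_0_1; exists (Z.of_nat (S i)); rewrite <- INR_IZR_INZ.
    unfold t; rewrite plus_INR, mult_INR; simpl (INR 2); simpl (INR 1).
    field; pose proof (pos_INR n); lra. }
  rewrite sin_odd_mul in sin_Nt.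
  apply Rmult_integral in sin_Nt as [sin_t | ]; [|assumption].
  pose proof (sin_root_angle_pos n i lt_i_n) as sin_pos; fold t in sin_pos; lra.
Qed.

Lemma inv_power_sum_sin_odd_root n :
  let p k := sin_odd_coef n k / (2 * INR n + 1) in
  inv_power_sum 4 (sin_odd_root n) n
  = p 1%nat ^ 4 - 4 * p 1%nat ^ 2 * p 2%nat + 2 * p 2%nat ^ 2
    + 4 * p 1%nat * p 3%nat - 4 * p 4%nat.
Proof.
  intro p; assert (N_neq0 : 2 * INR n + 1 <> 0) by (pose proof (pos_INR n); lra).
  apply inv_power_sums_newton.
  - intros i j ij; apply Rlt_not_eq, sin_odd_root_lt; exact ij.
  - intros i lt_i_n; split.
    + pose proof (sin_root_angle_pos n i lt_i_n); unfold sin_odd_root; nra.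
    + unfold p; rewrite peval_scale, sin_odd_root_is_root by exact lt_i_n.
      field; exact N_neq0.
  - unfold p; rewrite sin_odd_coef_low by lia; simpl; field; exact N_neq0.
  - intros k lt_n_k; unfold p; rewrite sin_odd_coef_deg by exact lt_n_k; field; exact N_neq0.
Qed.

Lemma inv_power_sum_succ k r m :
  inv_power_sum k r (S m) = sum_f_R0 (fun i => (/ r i) ^ k) m.
Proof. induction m as [|m IH]; simpl in *; [ring | rewrite <- IH; reflexivity]. Qed.

Theorem mainTheorem14 (n : nat) (hn : (1 <= n)%nat) :
  sum_f_R0 (fun k => (csc (PI * INR (S k) / (2 * INR n + 1))) ^ 8) (Nat.pred n)
  = 128 * (INR n + 1) * INR n * (INR n ^ 2 + INR n + 3)
    * (3 * INR n ^ 4 + 6 * INR n ^ 3 + 7 * INR n ^ 2 + 4 * INR n + 15) / 14175.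
Proof.
  assert (csc_sin_odd_root : forall i, (i <= Nat.pred n)%nat ->
    csc (PI * INR (S i) / (2 * INR n + 1)) ^ 8 = (/ sin_odd_root n i) ^ 4).
  { intros i le_i; pose proof (sin_root_angle_pos n i ltac:(lia)).
    unfold csc, sin_odd_root; field; lra. }
  rewrite (sum_eq _ _ _ csc_sin_odd_root), <- inv_power_sum_succ,
    Nat.succ_pred_pos by lia.
  rewrite inv_power_sum_sin_odd_root, !sin_odd_coef_low by lia; simpl.
  field; pose proof (pos_INR n); lra.
Qed.
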